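(* Assume we are either in the $\delta$-algebraic setting or in the $\delta$-arithmetic setting, and let $n\geq 2$. Let $\alpha:R^{\times}\times R^{n-1}\rightarrow R$ be a $\delta$-map and $\lambda\in R^{n-1}$ a row vector such that for all $(a_1,b_1),(a_2,b_2)\in R^{\times}\times R^{n-1}$, $$\alpha(a_1a_2,b_1+a_1b_2)=\alpha(a_1,b_1)+\alpha(a_2,b_2)+a_1^{-1}(1-a_2^{-1})b_1\lambda^t.$$ Then for all $a_1,a_2,a\in R^{\times}$ and $b\in R^{n-1}$, $$\alpha(a_1a_2,0)=\alpha(a_1,0)+\alpha(a_2,0),\qquad \alpha(a,b)=\alpha(a,0)-a^{-1}b\lambda^t.$$
   Context: Elements of $R^{n-1}$ are row vectors, $t$ denotes transpose, so $b\lambda^t\in R$. $\delta$-arithmetic setting: $p$ odd prime, $R$ the complete discrete valuation ring with maximal ideal $pR$ and residue field $\mathbb{F}_p^a$, $\phi$ the Frobenius lift on $R$, $\delta x=(\phi(x)-x^p)/p$; a $\delta$-map $R^{\times}\times R^{n-1}\to R^M$ is one of the form $(a,b)\mapsto F(a,b,\delta a,\delta b,\dots,\delta^m a,\delta^m b)$ with $F$ an $M$-tuple of restricted power series over $R$ ($p$-adically completed) in these variables and the inverse of the variable for $a$. $\delta$-algebraic setting: $R$ a $\delta$-closed (Kolchin's constrainedly closed) field of characteristic zero with derivation $\delta$; $\delta$-maps defined the same way with $F$ polynomial over $R$. *)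

From HB Require Import structures.
From mathcomp Require Import all_boot all_order all_algebra.
From mathcomp Require Import mpoly.
Set Implicit Arguments. Unset Strict Implicit. Unset Printing Implicit Defensive.
Import Order.TTheory GRing.Theory Num.Theory.
Local Open Scope ring_scope.

(* Jets.  For (a,b) in R^x * R^{n-1} and an order m, the variables of a *)
(* delta-map are  a, b_1..b_{n-1}, delta a, delta b, ..., delta^m a,     *)
(* delta^m b, and a^{-1}.  We list them in this order in a sequence.    *)
Definition jet_size (n m : nat) : nat := (m.+1 * (n.-1).+1).+1.

Definition jet_seq (R : unitRingType) (delta : R -> R) (n m : nat)
    (a : R) (b : 'rV[R]_(n.-1)) : seq R :=
  flatten [seq [seq iter j delta x | x <- a :: [seq b 0 i | i <- enum 'I_(n.-1)]]
          | j <- iota 0 m.+1] ++ [:: a^-1].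

Definition jet (R : unitRingType) (delta : R -> R) (n m : nat)
    (a : R) (b : 'rV[R]_(n.-1)) : 'I_(jet_size n m) -> R :=
  fun v => nth 0 (jet_seq delta m a b) v.

Definition derivation (R : nzRingType) (delta : R -> R) : Prop :=
  (forall x y, delta (x + y) = delta x + delta y) /\
  (forall x y, delta (x * y) = delta x * y + x * delta y).

(* A differential polynomial in N differential indeterminates y_0..y_{N-1}, *)
(* of order <= m, with coefficients in R: an ordinary polynomial in the     *)
(* N * (m+1) variables delta^j y_i (variable number i*(m+1)+j).  Its value  *)
Definition dpoly_eval (R : nzRingType) (K : nzRingType) (iota : R -> K)
    (deltaK : K -> K) (N m : nat) (f : {mpoly R[N * m.+1]}) (xs : seq K) : K :=
  mmap iota (fun v : 'I_(N * m.+1) => iter (v %% m.+1) deltaK (nth 0 xs (v %/ m.+1))) f.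

Definition constrainedly_closed (R : idomainType) (delta : R -> R) : Prop :=
  forall (N m : nat) (fs : seq {mpoly R[N * m.+1]}) (g : {mpoly R[N * m.+1]}),
    (exists (K : fieldType) (deltaK : K -> K) (iota : {rmorphism R -> K}),
       derivation deltaK /\ (forall x, deltaK (iota x) = iota (delta x)) /\
       exists xs : seq K, size xs = N /\
         all (fun f => dpoly_eval iota deltaK f xs == 0) fs /\
         dpoly_eval iota deltaK g xs != 0) ->
    exists xs : seq R, size xs = N /\
      all (fun f => dpoly_eval idfun delta f xs == 0) fs /\
      dpoly_eval idfun delta g xs != 0.

Definition delta_alg_setting (R : idomainType) (delta : R -> R) : Prop :=
  (forall x : R, x != 0 -> x \is a GRing.unit) /\
  [pchar R] =i pred0 /\ derivation delta /\ constrainedly_closed delta.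

Definition delta_map_alg (R : idomainType) (delta : R -> R) (n : nat)
    (alpha : R -> 'rV[R]_(n.-1) -> R) : Prop :=
  exists (m : nat) (F : {mpoly R[jet_size n m]}),
    forall a b, a \is a GRing.unit -> alpha a b = F.@[@jet _ delta n m a b].

Definition pdvd (R : nzRingType) (p N : nat) (x : R) : Prop :=
  exists y : R, x = (p%:R) ^+ N * y.

(* R is a complete discrete valuation ring with maximal ideal pR and       *)
(* residue field an algebraic closure of F_p.                              *)
Definition cdvr_p (R : idomainType) (p : nat) : Prop :=
  (p%:R : R) != 0 /\ (p%:R : R) \isn't a GRing.unit /\
  (forall x : R, x != 0 -> exists (u : R) (k : nat),
      u \is a GRing.unit /\ x = u * (p%:R) ^+ k) /\
  (forall s : nat -> R, (forall N, pdvd p N (s N.+1 - s N)) ->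
     exists x, forall N, pdvd p N (x - s N)) /\
  (forall f : {poly R}, (1 < size f)%N -> lead_coef f \is a GRing.unit ->
     exists x, pdvd p 1 f.[x]) /\
  (forall x : R, exists f : {poly int}, f \is monic /\
     pdvd p 1 (map_poly (fun z : int => z%:~R) f).[x]).

Definition delta_arith_setting (R : idomainType) (p : nat)
    (phi : {rmorphism R -> R}) (delta : R -> R) : Prop :=
  prime p /\ odd p /\ cdvr_p R p /\
  (forall x, pdvd p 1 (phi x - x ^+ p)) /\
  (forall x, p%:R * delta x = phi x - x ^+ p).

(* Restricted power series in k variables: coefficient family c with     *)
(* c_nu -> 0 p-adically.                                                  *)
Definition restricted (R : nzRingType) (p k : nat) (c : {ffun 'I_k -> nat} -> R) : Prop :=
  forall N, exists S : seq {ffun 'I_k -> nat},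
    forall nu, nu \notin S -> pdvd p N (c nu).

Definition ps_evaluates (R : nzRingType) (p k : nat) (c : {ffun 'I_k -> nat} -> R)
    (x : 'I_k -> R) (v : R) : Prop :=
  forall N, exists S : seq {ffun 'I_k -> nat},
    (forall nu, nu \notin S -> pdvd p N (c nu)) /\
    pdvd p N (v - \sum_(nu <- S) c nu * \prod_(i < k) x i ^+ nu i).

Definition delta_map_arith (R : idomainType) (p : nat) (delta : R -> R) (n : nat)
    (alpha : R -> 'rV[R]_(n.-1) -> R) : Prop :=
  exists (m : nat) (c : {ffun 'I_(jet_size n m) -> nat} -> R),
    restricted p c /\
    forall a b, a \is a GRing.unit -> ps_evaluates p c (@jet _ delta n m a b) (alpha a b).

From HB Require Import structures.
From mathcomp Require Import all_boot all_order all_algebra.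
From mathcomp Require Import mpoly.
From mathcomp Require Import ring.
Import Order.TTheory GRing.Theory Num.Theory.
Local Open Scope ring_scope.

(* Only the cocycle identity and [2 != 0] (from char 0, resp. p odd) matter.  Writing l(b) = b lambda^t,
   setting a2 = 1 (resp. a1 = 1, b2 = 0) in the identity shows
   alpha a (a c) = alpha a 0 + alpha 1 c and
   alpha a c = alpha 1 c + alpha a 0 + (1 - a^-1) l(c), while alpha 1 is
   additive.  Comparing both at a = -1 gives 2 (alpha 1 c + l(c)) = 0, so
   alpha 1 = -l, and the first equation with c = a^-1 b is the claim. *)

Section LinearTwistedCocycle.

Variables (R : idomainType) (V : lmodType R).
Variables (alpha : R -> V -> R) (ell : V -> R).
Hypothesis ellZ : forall (a : R) (v : V), ell (a *: v) = a * ell v.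
Hypothesis alpha_cocycle : forall (a1 a2 : R) (b1 b2 : V),
  a1 \is a GRing.unit -> a2 \is a GRing.unit ->
  alpha (a1 * a2) (b1 + a1 *: b2) =
    alpha a1 b1 + alpha a2 b2 + a1^-1 * (1 - a2^-1) * ell b1.

Lemma ell0 : ell 0 = 0.
Proof. by rewrite -(scale0r (0 : V)) ellZ mul0r. Qed.

Lemma alpha_mul0 (a1 a2 : R) : a1 \is a GRing.unit -> a2 \is a GRing.unit ->
  alpha (a1 * a2) 0 = alpha a1 0 + alpha a2 0.
Proof.
move=> u1 u2; have := alpha_cocycle a1 a2 0 0 u1 u2.
by rewrite scaler0 addr0 ell0 mulr0 addr0.
Qed.

Lemma alpha1D (b1 b2 : V) : alpha 1 (b1 + b2) = alpha 1 b1 + alpha 1 b2.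
Proof.
have := alpha_cocycle 1 1 b1 b2 (unitr1 R) (unitr1 R).
by rewrite mul1r scale1r invr1 subrr mulr0 mul0r addr0.
Qed.

Lemma alpha10 : alpha 1 0 = 0.
Proof. by apply: (addrI (alpha 1 0)); rewrite -alpha1D !addr0. Qed.

Lemma alpha1N (c : V) : alpha 1 (- c) = - alpha 1 c.
Proof. by apply/eqP; rewrite -addr_eq0 -alpha1D addNr alpha10. Qed.

Lemma alpha_scale (a : R) (c : V) : a \is a GRing.unit ->
  alpha a (a *: c) = alpha a 0 + alpha 1 c.
Proof.
move=> ua; have := alpha_cocycle a 1 0 c ua (unitr1 R).
by rewrite mulr1 add0r invr1 subrr mulr0 mul0r addr0.
Qed.

Lemma alpha_split (a : R) (c : V) : a \is a GRing.unit ->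
  alpha a c = alpha 1 c + alpha a 0 + (1 - a^-1) * ell c.
Proof.
move=> ua; have := alpha_cocycle 1 a c 0 (unitr1 R) ua.
by rewrite mul1r scaler0 addr0 invr1 mul1r.
Qed.

Hypothesis two_neq0 : (2%:R : R) != 0.

Lemma alpha1E (c : V) : alpha 1 c = - ell c.
Proof.
have um1 : (-1 : R) \is a GRing.unit by rewrite unitrN unitr1.
have := alpha_split (-1) ((-1) *: c) um1.
rewrite alpha_scale // ellZ scaleN1r alpha1N invrN invr1 opprK => /eqP.
rewrite -subr_eq0 => /eqP eq0.
have : 2%:R * (alpha 1 c + ell c) = 0 by rewrite -eq0; ring.
by move/eqP; rewrite mulf_eq0 (negbTE two_neq0) addr_eq0 => /eqP.
Qed.

Lemma alphaE (a : R) (b : V) : a \is a GRing.unit ->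
  alpha a b = alpha a 0 - a^-1 * ell b.
Proof.
move=> ua; have := alpha_scale a (a^-1 *: b) ua.
by rewrite scalerA mulrV // scale1r alpha1E ellZ.
Qed.

End LinearTwistedCocycle.

Lemma natr2_neq0_pchar0 (R : nzRingType) : [pchar R] =i pred0 -> (2%:R : R) != 0.
Proof.
move=> charR0; apply/negP => /eqP two0.
have : (2 \in [pchar R])%N by apply/andP; split => //; apply/eqP.
by rewrite charR0.
Qed.

Lemma natr2_neq0_odd_nonunit (R : unitRingType) (p : nat) :
  odd p -> (p%:R : R) \isn't a GRing.unit -> (2%:R : R) != 0.
Proof.
move=> oddp; apply: contra => /eqP two0.
by rewrite -[p]odd_double_half oddp -mul2n natrD natrM two0 mul0r addr0 unitr1.
Qed.

Theorem lemma3p7 (R : idomainType) (delta : R -> R) (n : nat) (hn : (2 <= n)%N)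
    (alpha : R -> 'rV[R]_(n.-1) -> R) (lambda : 'rV[R]_(n.-1)) :
  ((delta_alg_setting delta /\ delta_map_alg delta alpha) \/
   (exists (p : nat) (phi : {rmorphism R -> R}),
      delta_arith_setting p phi delta /\ delta_map_arith p delta alpha)) ->
  (forall (a1 a2 : R) (b1 b2 : 'rV[R]_(n.-1)),
      a1 \is a GRing.unit -> a2 \is a GRing.unit ->
      alpha (a1 * a2) (b1 + a1 *: b2) =
        alpha a1 b1 + alpha a2 b2 + a1^-1 * (1 - a2^-1) * (b1 *m lambda^T) 0 0) ->
  (forall a1 a2 : R, a1 \is a GRing.unit -> a2 \is a GRing.unit ->
      alpha (a1 * a2) 0 = alpha a1 0 + alpha a2 0) /\
  (forall (a : R) (b : 'rV[R]_(n.-1)), a \is a GRing.unit ->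
      alpha a b = alpha a 0 - a^-1 * (b *m lambda^T) 0 0).
Proof.
move=> setting cocycle.
pose ell (b : 'rV[R]_(n.-1)) := (b *m lambda^T) 0 0.
have ellZ a b : ell (a *: b) = a * ell b by rewrite /ell -scalemxAl mxE.
have two_neq0 : (2%:R : R) != 0.
  case: setting => [[[_ [charR0 _]] _]|[p [_ [[_ [oddp [[_ [p_nonunit _]] _]]] _]]]].
  - exact: natr2_neq0_pchar0.
  - exact: natr2_neq0_odd_nonunit oddp p_nonunit.
split; first exact: alpha_mul0 ellZ cocycle.
exact: alphaE ellZ cocycle two_neq0.
Qed.
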